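(* There exist constants $A_1,A_2$ depending only on $l$ such that for all $0<\eta<\xi$: $$\int_\eta^\xi V_1(z;\xi,\eta)\,z^{l-\frac12}\,dz\le A_1(\xi-\eta)^l\left(\sqrt\xi-\sqrt\eta\right)\qquad(l\ge-\tfrac12),$$ and $$\int_0^\eta V_2(z;\xi,\eta)\,z^{l-\frac12}\,dz\le\begin{cases}A_2(\xi-\eta)^l\left(\sqrt\xi-\sqrt\eta\right),& l>0,\\[2pt] A_2(\xi-\eta)^{l+\frac12}\left(1-\frac\eta\xi\right)^{l+\frac12},&-\tfrac12\le l<0.\end{cases}$$
   Context: Let ${}_2F_1$ denote the Gauss hypergeometric function (analytically continued to $(-\infty,0)$). For $0<\eta<z<\xi$ put $\sigma_1=\frac{(z-\xi)\eta}{(z-\eta)\xi}$ and $V_1(z;\xi,\eta)=\frac{(z-\eta)^l\xi^l}{z^{2l}}\left|{}_2F_1(-l,-l;1;\sigma_1)\right|$. For $0<z<\eta<\xi$ put $\sigma_2=-\frac{z(\xi-\eta)}{\xi(\eta-z)}$ and $V_2(z;\xi,\eta)=\frac{|\sin(\pi l)|\Gamma^2(1+l)}{\pi\Gamma(2+2l)}\frac{(\xi-\eta)^{1+2l}z}{\xi^{l+1}(\eta-z)^{l+1}}\left|{}_2F_1(1+l,1+l;2+2l;\sigma_2)\right|$. *)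

From Stdlib Require Import Arith Reals Lra ClassicalEpsilon.
Open Scope R_scope.

Definition Rlim (u : nat -> R) : R :=
  epsilon (inhabits 0) (fun L => Un_cv u L).

Fixpoint poch (a : R) (n : nat) : R :=
  match n with
  | O => 1
  | S k => poch a k * (a + INR k)
  end.

Definition hyp_term (a b c y : R) (n : nat) : R :=
  poch a n * poch b n / (poch c n * INR (fact n)) * y ^ n.

Definition hyp_series (a b c y : R) : R :=
  Rlim (fun N => sum_f_R0 (hyp_term a b c y) N).

(* 2F1(a,b;c;x), analytically continued to x < 0 via the Pfaff
   transformation 2F1(a,b;c;x) = (1-x)^(-a) 2F1(a,c-b;c;x/(x-1)),
   where x/(x-1) lies in (0,1). *)
Definition hyp2F1 (a b c x : R) : R :=
  if Rlt_dec x 0 then Rpower (1 - x) (- a) * hyp_series a (c - b) c (x / (x - 1))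
  else hyp_series a b c x.

(* Euler's Gamma function via the Gauss limit formula
   Gamma(s) = lim n! n^s / (s (s+1) ... (s+n)), used here for s > 0. *)
Definition Gamma (s : R) : R :=
  Rlim (fun n => INR (fact n) * Rpower (INR n) s / poch s (S n)).

Definition sigma1 (z xi eta : R) : R := (z - xi) * eta / ((z - eta) * xi).

Definition V1 (l z xi eta : R) : R :=
  Rpower (z - eta) l * Rpower xi l / Rpower z (2 * l)
  * Rabs (hyp2F1 (- l) (- l) 1 (sigma1 z xi eta)).

Definition sigma2 (z xi eta : R) : R := - (z * (xi - eta) / (xi * (eta - z))).

Definition V2 (l z xi eta : R) : R :=
  Rabs (sin (PI * l)) * (Gamma (1 + l)) ^ 2 / (PI * Gamma (2 + 2 * l))
  * (Rpower (xi - eta) (1 + 2 * l) * z / (Rpower xi (l + 1) * Rpower (eta - z) (l + 1)))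
  * Rabs (hyp2F1 (1 + l) (1 + l) (2 + 2 * l) (sigma2 z xi eta)).

(* "The (possibly improper) integral over (a,b) of a function f >= 0 is <= M":
   for nonnegative integrands this means every integral over a compact
   subinterval [c,d] of (a,b) exists (Riemann) and is <= M. *)
Definition improper_int_le (f : R -> R) (a b M : R) : Prop :=
  forall c d, a < c -> c <= d -> d < b ->
    exists pr : Riemann_integrable f c d, RiemannInt pr <= M.

From Stdlib Require Import Arith Reals Lra Lia ClassicalEpsilon.
From Coquelicot Require Import Coquelicot.
Open Scope R_scope.

(* For [x < 0], [hyp2F1] is the Pfaff transform [(1-x)^(-a) 2F1(a, c-b; c; x/(x-1))].
   When [1 <= c] and [a <= b], the coefficients of the series [2F1(a, c-b; c; y)] are
   [O(1/n)] (the ratio test with a summable correction), so on [0 <= y < 1] the series is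
   bounded by a constant times [(1-y)^(-1/2)]; hence [|2F1(a,b;c;x)| <= K (1-x)^(1/2-a)].
   This bounds [V1 z^(l-1/2)] by a multiple of [(xi-eta)^(l+1/2) xi^(-1/2) (z-eta)^(-1/2)]
   and [V2 z^(l-1/2)] by a multiple of
   [(xi-eta)^(1+2l) xi^(-1/2) eta^(-l-1/2) z^(l+1/2) (xi-z)^(-l-1/2) (eta-z)^(-1/2)],
   and these majorants are integrated through explicit primitives. For [l < 0] it suffices
   to use [z <= eta] and [eta - z <= xi - z]; for [l > 0] the primitive
   [-2 sqrt(eta-z) (xi-z)^(-l-1/2) + (1+2l)/l (xi-z)^(-l)] keeps the factor
   [(xi-eta)^(-l)], which is what produces [sqrt xi - sqrt eta] as [eta -> xi].
   The Gamma-function prefactor of [V2] only enters as a constant. *)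

Lemma Rlim_eq (u : nat -> R) (L : R) : Un_cv u L -> Rlim u = L.
Proof.
  intros Hu. unfold Rlim.
  assert (Hex : exists L, Un_cv u L) by eauto.
  eapply UL_sequence; [apply (epsilon_spec (inhabits 0) _ Hex) | exact Hu].
Qed.

Lemma Rpower_pos (x a : R) : 0 < Rpower x a.
Proof. apply exp_pos. Qed.

(** * Power series with coefficients of order [1/n] *)

Lemma geom_sum_le (q : R) (N : nat) : 0 <= q < 1 -> sum_f_R0 (pow q) N <= / (1 - q).
Proof.
  intros Hq. rewrite tech3 by lra.
  assert (0 <= q ^ S N) by (apply pow_le; lra).
  unfold Rdiv. rewrite <- (Rmult_1_l (/ (1 - q))) at 2.
  apply Rmult_le_compat_r; [apply Rlt_le, Rinv_0_lt_compat|]; lra.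
Qed.

(* AM-GM with weight [s]: [p q <= s p^2 / 2 + q^2 / (2 s)], then [1/(2 (n+1)^2) <= 1/(n+1) - 1/(n+2)]. *)
Lemma pow_div_le (y : R) (n : nat) : 0 <= y < 1 ->
  y ^ S n / INR (S n) <=
  sqrt (1 - y) / 2 * (y ^ 2) ^ n + (/ INR (S n) - / INR (S (S n))) / sqrt (1 - y).
Proof.
  intros Hy. rewrite (S_INR (S n)).
  set (s := sqrt (1 - y)). set (m := INR (S n)).
  assert (Hs : 0 < s) by (apply sqrt_lt_R0; lra).
  assert (Hm : 1 <= m) by (apply (le_INR 1); lia).
  assert (Hpow : (y ^ n) ^ 2 = (y ^ 2) ^ n) by (rewrite <- !pow_mult, Nat.mul_comm; reflexivity).
  rewrite <- Hpow. simpl pow at 1. set (p := y ^ n) in *.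
  assert (Hp : 0 <= p) by (apply pow_le; lra).
  assert (Hm2 : 0 < 2 * s * m ^ 2) by (apply Rmult_lt_0_compat; [lra | apply pow_lt; lra]).
  assert (Hamgm : y * p / m <= s / 2 * (y * p) ^ 2 + / (2 * s * m ^ 2)).
  { apply Rmult_le_reg_r with (2 * s * m ^ 2); [exact Hm2|].
    replace (y * p / m * (2 * s * m ^ 2)) with (2 * (s * m * (y * p))) by (field; lra).
    replace ((s / 2 * (y * p) ^ 2 + / (2 * s * m ^ 2)) * (2 * s * m ^ 2))
      with ((s * m * (y * p)) ^ 2 + 1) by (field; lra).
    pose proof (pow2_ge_0 (s * m * (y * p) - 1)). nra. }
  assert (Htel : / (2 * s * m ^ 2) <= (/ m - / (m + 1)) / s).
  { replace ((/ m - / (m + 1)) / s) with (/ (s * (m * (m + 1)))) by (field; lra).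
    apply Rinv_le_contravar.
    - apply Rmult_lt_0_compat; [lra | apply Rmult_lt_0_compat; lra].
    - replace (2 * s * m ^ 2) with (s * (2 * m ^ 2)) by ring.
      apply Rmult_le_compat_l; nra. }
  assert (Hy2 : (y * p) ^ 2 <= p ^ 2).
  { rewrite Rpow_mult_distr. pose proof (pow2_ge_0 p). assert (y ^ 2 <= 1) by nra. nra. }
  assert (0 < s / 2) by lra.
  nra.
Qed.

Lemma sum_pow_div_le (y : R) (N : nat) : 0 <= y < 1 ->
  sum_f_R0 (fun n => y ^ S n / INR (S n)) N <= 2 / sqrt (1 - y).
Proof.
  intros Hy. set (s := sqrt (1 - y)).
  assert (Hs : 0 < s) by (apply sqrt_lt_R0; lra).
  assert (Hss : s * s = 1 - y) by (apply sqrt_sqrt; lra).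
  assert (Hsplit : sum_f_R0 (fun n => y ^ S n / INR (S n)) N <=
                   s / 2 * sum_f_R0 (pow (y ^ 2)) N + (1 - / INR (S (S N))) / s).
  { induction N as [|N IH].
    - simpl sum_f_R0. pose proof (pow_div_le y 0 Hy) as H0. fold s in H0.
      replace (/ INR 1) with 1 in H0 by (simpl; field). exact H0.
    - rewrite !tech5. pose proof (pow_div_le y (S N) Hy) as HN. fold s in HN.
      replace ((1 - / INR (S (S (S N)))) / s)
        with ((1 - / INR (S (S N))) / s + (/ INR (S (S N)) - / INR (S (S (S N)))) / s) by (unfold Rdiv; ring).
      lra. }
  assert (Hgeom : s / 2 * sum_f_R0 (pow (y ^ 2)) N <= / (2 * s)).
  { assert (Hy2 : 0 <= y ^ 2 < 1) by (split; nra).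
    apply Rle_trans with (s / 2 * / (1 - y ^ 2)).
    - apply Rmult_le_compat_l; [lra | apply geom_sum_le, Hy2].
    - replace (s / 2 * / (1 - y ^ 2)) with (/ (2 * (1 - y ^ 2) / s)) by (field; lra).
      apply Rinv_le_contravar; [lra|].
      apply Rmult_le_reg_r with s; [exact Hs|].
      replace (2 * (1 - y ^ 2) / s * s) with (2 * (1 - y ^ 2)) by (field; lra). nra. }
  assert (Htail : (1 - / INR (S (S N))) / s <= / s).
  { assert (0 < / INR (S (S N))) by (apply Rinv_0_lt_compat, lt_0_INR; lia).
    unfold Rdiv. rewrite <- (Rmult_1_l (/ s)) at 2.
    apply Rmult_le_compat_r; [apply Rlt_le, Rinv_0_lt_compat|]; lra. }
  replace (2 / s) with (/ (2 * s) + / s + / (2 * s)) by (field; lra).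
  assert (0 < / (2 * s)) by (apply Rinv_0_lt_compat; lra).
  lra.
Qed.

Section DecayingCoefficients.

Variables (t : nat -> R) (C : R).
Hypothesis t_0 : t 0%nat = 1.
Hypothesis t_decay : forall n, INR n * Rabs (t n) <= C.

Lemma decay_const_ge0 : 0 <= C.
Proof. pose proof (t_decay 0). simpl in *. pose proof (Rabs_pos (t 0%nat)). lra. Qed.

Lemma Rabs_coef_le (n : nat) : Rabs (t n) <= 1 + C.
Proof.
  destruct n as [|n]; [rewrite t_0, Rabs_R1; pose proof decay_const_ge0; lra|].
  pose proof (t_decay (S n)) as Hn. rewrite S_INR in Hn.
  pose proof (pos_INR n). pose proof (Rabs_pos (t (S n))). nra.
Qed.

Lemma CV_radius_ge_1 : Rbar_le 1 (CV_radius t).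
Proof.
  apply (proj1 (CV_radius_bounded t)). exists (1 + C).
  intros n. rewrite pow1, Rmult_1_r. apply Rabs_coef_le.
Qed.

Lemma in_CV_disk (y : R) : Rabs y < 1 -> Rbar_lt (Rabs y) (CV_radius t).
Proof.
  intros Hy. pose proof CV_radius_ge_1.
  destruct (CV_radius t); simpl in *; lra || auto.
Qed.

Lemma Un_cv_PSeries (y : R) : Rabs y < 1 -> Un_cv (sum_f_R0 (fun n => t n * y ^ n)) (PSeries t y).
Proof.
  intros Hy. apply is_series_Reals, Series_correct, ex_series_Rabs.
  exact (CV_disk_inside _ _ (in_CV_disk y Hy)).
Qed.

Lemma PSeries_continuous_unit_disk (y : R) : Rabs y < 1 -> continuous (PSeries t) y.
Proof.
  intros Hy. apply continuity_pt_filterlim, PSeries_continuity, in_CV_disk, Hy.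
Qed.

Lemma partial_sum_Rabs_le (y : R) (N : nat) : 0 <= y < 1 ->
  sum_f_R0 (fun n => Rabs (t n * y ^ n)) N <= 1 + C * (2 / sqrt (1 - y)).
Proof.
  intros Hy. pose proof decay_const_ge0 as HC.
  assert (H2s : 0 < 2 / sqrt (1 - y)) by (apply Rdiv_lt_0_compat; [lra | apply sqrt_lt_R0; lra]).
  destruct N as [|N].
  - simpl. rewrite t_0, Rmult_1_r, Rabs_R1. nra.
  - rewrite decomp_sum by lia. simpl pred. rewrite t_0, Rmult_1_r, Rabs_R1.
    apply Rplus_le_compat_l.
    apply Rle_trans with (sum_f_R0 (fun n => y ^ S n / INR (S n) * C) N).
    + apply sum_Rle. intros n _.
      assert (Hn : 0 < INR (S n)) by (apply lt_0_INR; lia).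
      assert (Hyn : 0 <= y ^ S n) by (apply pow_le; lra).
      rewrite Rabs_mult, (Rabs_right (y ^ S n)) by lra.
      apply Rmult_le_reg_l with (INR (S n)); [exact Hn|].
      replace (INR (S n) * (y ^ S n / INR (S n) * C)) with (C * y ^ S n) by (field; lra).
      rewrite <- Rmult_assoc. apply Rmult_le_compat_r; [exact Hyn | apply t_decay].
    + rewrite <- scal_sum. apply Rmult_le_compat_l; [exact HC | apply sum_pow_div_le, Hy].
Qed.

Lemma Rabs_PSeries_le (y : R) : 0 <= y < 1 -> Rabs (PSeries t y) <= (1 + 2 * C) / sqrt (1 - y).
Proof.
  intros Hy. pose proof decay_const_ge0 as HC.
  assert (Hs : 0 < sqrt (1 - y)) by (apply sqrt_lt_R0; lra).
  assert (Hs1 : sqrt (1 - y) <= 1) by (rewrite <- sqrt_1 at 2; apply sqrt_le_1_alt; lra).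
  assert (Hbound : 1 + C * (2 / sqrt (1 - y)) <= (1 + 2 * C) / sqrt (1 - y)).
  { replace ((1 + 2 * C) / sqrt (1 - y)) with (1 / sqrt (1 - y) + C * (2 / sqrt (1 - y))) by (field; lra).
    apply Rplus_le_compat_r. apply Rmult_le_reg_r with (sqrt (1 - y)); [exact Hs|].
    replace (1 / sqrt (1 - y) * sqrt (1 - y)) with 1 by (field; lra). lra. }
  assert (Hcv := Un_cv_PSeries y ltac:(rewrite Rabs_right; lra)).
  apply is_lim_seq_Reals, is_lim_seq_abs in Hcv.
  assert (Hle := is_lim_seq_le _ (fun _ => 1 + C * (2 / sqrt (1 - y))) _ _
    (fun N => Rle_trans _ _ _ (sum_f_R0_triangle _ N) (partial_sum_Rabs_le y N Hy)) Hcv (is_lim_seq_const _)).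
  simpl in Hle. lra.
Qed.

End DecayingCoefficients.

Lemma bounded_of_eventually_le (v : nat -> R) (N : nat) (M : R) :
  (forall n, (N <= n)%nat -> v n <= M) -> exists B, forall n, v n <= B.
Proof.
  revert M. induction N as [|N IH]; intros M HM; [exists M; intros n; apply HM; lia|].
  apply (IH (Rmax M (v N))). intros n Hn.
  destruct (Nat.eq_dec n N) as [->|Hne]; [apply Rmax_r|].
  eapply Rle_trans; [apply HM; lia | apply Rmax_l].
Qed.

(* The ratio [1 + K/(n(n+1)) <= exp (K/n - K/(n+1))] telescopes. *)
Lemma bounded_of_ratio_le (v : nat -> R) (K : R) (N : nat) :
  0 <= K -> (1 <= N)%nat -> (forall n, 0 <= v n) ->
  (forall n, (N <= n)%nat -> v (S n) <= (1 + K / (INR n * (INR n + 1))) * v n) ->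
  exists B, forall n, v n <= B.
Proof.
  intros HK HN Hv Hratio.
  assert (HN0 : 0 < INR N) by (apply lt_0_INR; lia).
  assert (Hinv : forall k, v (N + k)%nat <= v N * exp (K * (/ INR N - / INR (N + k)))).
  { induction k as [|k IH].
    - rewrite Nat.add_0_r, Rminus_diag, Rmult_0_r, exp_0. lra.
    - rewrite Nat.add_succ_r, S_INR.
      set (m := INR (N + k)) in *.
      assert (Hm : 0 < m) by (apply lt_0_INR; lia).
      set (x := K / (m * (m + 1))).
      assert (Hx : 0 <= x) by (apply Rdiv_le_0_compat; [lra | apply Rmult_lt_0_compat; lra]).
      replace (K * (/ INR N - / (m + 1))) with (K * (/ INR N - / m) + x) by (unfold x; field; lra).
      rewrite exp_plus.
      apply Rle_trans with ((1 + x) * v (N + k)%nat); [apply Hratio; lia|].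
      pose proof (exp_ineq1_le x). pose proof (Hv (N + k)%nat).
      pose proof (exp_pos (K * (/ INR N - / m))). pose proof (Hv N).
      apply Rle_trans with (exp x * (v N * exp (K * (/ INR N - / m)))); [|lra].
      apply Rmult_le_compat; lra. }
  apply (bounded_of_eventually_le v N (v N * exp (K / INR N))).
  intros n Hn. replace n with (N + (n - N))%nat by lia.
  eapply Rle_trans; [apply Hinv|]. apply Rmult_le_compat_l; [apply Hv|].
  assert (Htail : 0 <= K * / INR (N + (n - N))).
  { apply Rmult_le_pos; [exact HK | apply Rlt_le, Rinv_0_lt_compat, lt_0_INR; lia]. }
  destruct (Req_dec (K * (/ INR N - / INR (N + (n - N)))) (K / INR N)) as [-> | Hne]; [lra|].
  apply Rlt_le, exp_increasing. unfold Rdiv in *. lra.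
Qed.

(** * Hypergeometric series *)

Definition hyp_coef (a b c : R) (n : nat) : R :=
  poch a n * poch b n / (poch c n * INR (fact n)).

Lemma hyp_coef_0 (a b c : R) : hyp_coef a b c 0 = 1.
Proof. unfold hyp_coef; simpl; field. Qed.

Lemma poch_pos (c : R) (n : nat) : 0 < c -> 0 < poch c n.
Proof.
  intros Hc. induction n as [|n IH]; simpl; [lra|].
  apply Rmult_lt_0_compat; [exact IH | pose proof (pos_INR n); lra].
Qed.

Lemma hyp_coef_S (a b c : R) (n : nat) : 0 < c ->
  hyp_coef a b c (S n) =
  hyp_coef a b c n * ((a + INR n) * (b + INR n) / ((c + INR n) * (INR n + 1))).
Proof.
  intros Hc. unfold hyp_coef. simpl poch. rewrite fact_simpl, mult_INR, S_INR.
  pose proof (poch_pos c n Hc). pose proof (INR_fact_neq_0 n). pose proof (pos_INR n).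
  field. repeat split; lra.
Qed.

(* For [n] large, [|(a+n)(b+n)| <= n(n+c) + |ab|], which is the ratio condition with [K = |ab|]. *)
Lemma hyp_coef_decay (a b c : R) : 1 <= c -> a + b <= c ->
  exists C, forall n, INR n * Rabs (hyp_coef a b c n) <= C.
Proof.
  intros Hc Habc. set (K := Rabs (a * b)).
  destruct (INR_unbounded (Rabs a + Rabs b)) as [N0 HN0].
  apply (bounded_of_ratio_le _ K (S N0)); [apply Rabs_pos | lia |
    intros n; apply Rmult_le_pos; [apply pos_INR | apply Rabs_pos] |].
  intros n Hn. rewrite hyp_coef_S, S_INR by lra.
  assert (HnN : INR (S N0) <= INR n) by (apply le_INR; exact Hn).
  rewrite S_INR in HnN. set (x := INR n) in *. set (T := Rabs (hyp_coef a b c n)).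
  assert (HT : 0 <= T) by apply Rabs_pos.
  assert (Ha : 0 < a + x) by (pose proof (Rle_abs (- a)); rewrite Rabs_Ropp in *; pose proof (Rabs_pos b); lra).
  assert (Hb : 0 < b + x) by (pose proof (Rle_abs (- b)); rewrite Rabs_Ropp in *; pose proof (Rabs_pos a); lra).
  assert (Hx : 1 <= x) by (pose proof (Rabs_pos a); pose proof (Rabs_pos b); lra).
  assert (Hab : a * b <= K) by apply Rle_abs.
  rewrite Rabs_mult, (Rabs_right (_ / _)) by (apply Rle_ge, Rdiv_le_0_compat; nra). fold T.
  replace ((x + 1) * (T * ((a + x) * (b + x) / ((c + x) * (x + 1)))))
    with (T * ((a + x) * (b + x)) / (c + x)) by (field; lra).
  replace ((1 + K / (x * (x + 1))) * (x * T))
    with (T * (x * (c + x) + K * ((c + x) / (x + 1)))  / (c + x)) by (field; lra).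
  apply Rmult_le_compat_r; [apply Rlt_le, Rinv_0_lt_compat; lra|].
  apply Rmult_le_compat_l; [exact HT|].
  assert (1 <= (c + x) / (x + 1)).
  { apply Rmult_le_reg_r with (x + 1); [lra|].
    replace ((c + x) / (x + 1) * (x + 1)) with (c + x) by (field; lra). lra. }
  assert (0 <= K) by apply Rabs_pos.
  nra.
Qed.

Lemma hyp_series_PSeries (a b c C y : R) :
  (forall n, INR n * Rabs (hyp_coef a b c n) <= C) -> Rabs y < 1 ->
  hyp_series a b c y = PSeries (hyp_coef a b c) y.
Proof.
  intros Hdecay Hy. apply Rlim_eq, (Un_cv_PSeries _ C (hyp_coef_0 a b c) Hdecay y Hy).
Qed.

Lemma continuous_Rmult (f g : R -> R) (x : R) :
  continuous f x -> continuous g x -> continuous (fun y => f y * g y) x.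
Proof. apply (continuous_mult f g x). Qed.

Lemma continuous_of_ex_derive (f : R -> R) (x : R) : ex_derive f x -> continuous f x.
Proof. apply (@ex_derive_continuous R_AbsRing R_NormedModule). Qed.

Lemma pfaff_arg_range (x : R) : x < 0 -> 0 <= x / (x - 1) < 1.
Proof.
  intros Hx. replace (x / (x - 1)) with (- x / (1 - x)) by (field; lra).
  split; [apply Rdiv_le_0_compat; lra|].
  apply Rmult_lt_reg_r with (1 - x); [lra|].
  replace (- x / (1 - x) * (1 - x)) with (- x) by (field; lra). lra.
Qed.

Lemma pfaff_arg_abs (x : R) : x < 0 -> Rabs (x / (x - 1)) < 1.
Proof. intros Hx. pose proof (pfaff_arg_range x Hx). rewrite Rabs_right; lra. Qed.

Section PfaffBranch.

Variables a b c : R.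
Hypothesis c_ge1 : 1 <= c.
Hypothesis a_le_b : a <= b.

Lemma pfaff_coef_decay : exists C, forall n, INR n * Rabs (hyp_coef a (c - b) c n) <= C.
Proof. apply hyp_coef_decay; lra. Qed.

Lemma hyp2F1_neg (x : R) : x < 0 ->
  hyp2F1 a b c x = Rpower (1 - x) (- a) * PSeries (hyp_coef a (c - b) c) (x / (x - 1)).
Proof.
  intros Hx. destruct pfaff_coef_decay as [C HC]. unfold hyp2F1.
  destruct (Rlt_dec x 0) as [_|]; [|lra].
  rewrite (hyp_series_PSeries _ _ _ C); [reflexivity | exact HC | apply pfaff_arg_abs, Hx].
Qed.

Lemma hyp2F1_continuous_neg (x : R) : x < 0 -> continuous (hyp2F1 a b c) x.
Proof.
  intros Hx. destruct pfaff_coef_decay as [C HC].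
  apply continuous_ext_loc with
    (fun y => Rpower (1 - y) (- a) * PSeries (hyp_coef a (c - b) c) (y / (y - 1))).
  - apply filter_imp with (fun y => y < 0); [intros y Hy; symmetry; apply hyp2F1_neg, Hy | apply open_lt, Hx].
  - apply continuous_Rmult.
    + apply continuous_of_ex_derive. unfold Rpower. auto_derive. lra.
    + apply (continuous_comp (fun y => y / (y - 1)) (PSeries (hyp_coef a (c - b) c))).
      * apply continuous_of_ex_derive. auto_derive. lra.
      * apply (PSeries_continuous_unit_disk _ C (hyp_coef_0 _ _ _) HC), pfaff_arg_abs, Hx.
Qed.

(* On the Pfaff branch [1 - x/(x-1) = 1/(1-x)], so the [1/sqrt(1-y)] growth becomes [sqrt(1-x)]. *)
Lemma hyp2F1_neg_bound : exists K, 0 <= K /\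
  forall x, x < 0 -> Rabs (hyp2F1 a b c x) <= K * Rpower (1 - x) (1/2 - a).
Proof.
  destruct pfaff_coef_decay as [C HC].
  exists (1 + 2 * C). split; [pose proof (decay_const_ge0 _ _ HC); lra|].
  intros x Hx. rewrite hyp2F1_neg by exact Hx.
  rewrite Rabs_mult, (Rabs_right (Rpower _ _)) by (apply Rle_ge, Rlt_le, Rpower_pos).
  eapply Rle_trans.
  { apply Rmult_le_compat_l; [apply Rlt_le, Rpower_pos|].
    apply (Rabs_PSeries_le _ C (hyp_coef_0 _ _ _) HC), pfaff_arg_range, Hx. }
  replace (1 - x / (x - 1)) with (/ (1 - x)) by (field; lra).
  rewrite sqrt_inv, Rmult_comm.
  replace (1/2 - a) with (/ 2 + - a) by field.
  rewrite Rpower_plus, Rpower_sqrt by lra. right. field.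
  apply Rgt_not_eq, sqrt_lt_R0; lra.
Qed.

End PfaffBranch.

Lemma improper_int_le_of_primitive (f g G : R -> R) (a b M : R) :
  (forall x, a < x < b -> continuous f x) ->
  (forall x, a < x < b -> continuous g x) ->
  (forall x, a < x < b -> is_derive G x (g x)) ->
  (forall x, a < x < b -> f x <= g x) ->
  (forall c d, a < c -> c <= d -> d < b -> G d - G c <= M) ->
  improper_int_le f a b M.
Proof.
  intros Hf Hg HG Hfg HM c d Hc Hcd Hd.
  assert (Hin : forall x, Rmin c d <= x <= Rmax c d -> a < x < b).
  { rewrite Rmin_left, Rmax_right by lra. intros x Hx. lra. }
  assert (Ef : ex_RInt f c d).
  { apply (@ex_RInt_continuous R_CompleteNormedModule). intros x Hx. apply Hf, Hin, Hx. }
  assert (Ig : is_RInt g c d (minus (G d) (G c))).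
  { apply (@is_RInt_derive R_CompleteNormedModule); intros x Hx; [apply HG | apply Hg]; apply Hin, Hx. }
  exists (ex_RInt_Reals_0 _ _ _ Ef). rewrite <- RInt_Reals.
  eapply Rle_trans; [apply (RInt_le f g c d Hcd Ef (ex_intro _ _ Ig)) | rewrite (is_RInt_unique _ _ _ _ Ig)].
  - intros x Hx. apply Hfg. lra.
  - apply HM; assumption.
Qed.

Lemma ln_sqrt (x : R) : 0 < x -> ln (sqrt x) = ln x / 2.
Proof. intros Hx. rewrite <- Rpower_sqrt, ln_Rpower by exact Hx. field. Qed.

Lemma Rpower_le_base_neg (a x y : R) : a <= 0 -> 0 < x <= y -> Rpower y a <= Rpower x a.
Proof.
  intros Ha Hxy. replace a with (- - a) by ring. rewrite (Rpower_Ropp y (- a)), (Rpower_Ropp x (- a)).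
  apply Rinv_le_contravar; [apply Rpower_pos | apply Rle_Rpower_l; lra].
Qed.

Lemma Rpower_add_half (x a : R) : 0 < x -> Rpower x (a + 1/2) = Rpower x a * sqrt x.
Proof. intros Hx. rewrite <- Rpower_sqrt, <- Rpower_plus by exact Hx. f_equal. field. Qed.

Lemma sub_div_sqrt_le (xi eta : R) : 0 < eta -> eta <= xi ->
  (xi - eta) / sqrt xi <= 2 * (sqrt xi - sqrt eta).
Proof.
  intros He Hex.
  assert (Hxi : 0 < sqrt xi) by (apply sqrt_lt_R0; lra).
  assert (Hle : sqrt eta <= sqrt xi) by (apply sqrt_le_1_alt; lra).
  pose proof (sqrt_sqrt xi ltac:(lra)). pose proof (sqrt_sqrt eta ltac:(lra)). pose proof (sqrt_pos eta).
  apply Rmult_le_reg_r with (sqrt xi); [exact Hxi|].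
  replace ((xi - eta) / sqrt xi * sqrt xi) with (xi - eta) by (field; lra). nra.
Qed.

Ltac positivity :=
  repeat (first [apply Rmult_lt_0_compat | apply Rinv_0_lt_compat | apply Rdiv_lt_0_compat
                | apply Rpower_pos | apply sqrt_lt_R0 | apply exp_pos]); try lra.

(* Identities between products of real powers are checked after taking logarithms. *)
Ltac ln_expand :=
  unfold Rdiv; repeat (first [rewrite ln_mult by positivity | rewrite ln_Rinv by positivity
                             | rewrite ln_Rpower | rewrite ln_sqrt by positivity]).

(** * The integral of [V1] *)

Lemma sigma1_neg (z xi eta : R) : 0 < eta < z -> z < xi -> sigma1 z xi eta < 0.
Proof.
  intros Hz Hzx. unfold sigma1.
  assert (0 < - ((z - xi) * eta) / ((z - eta) * xi)) by (apply Rdiv_lt_0_compat; nra).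
  replace ((z - xi) * eta / ((z - eta) * xi)) with (- (- ((z - xi) * eta) / ((z - eta) * xi))) by (field; nra).
  lra.
Qed.

Lemma V1_integrand_le (l xi eta K z : R) :
  (forall x, x < 0 -> Rabs (hyp2F1 (- l) (- l) 1 x) <= K * Rpower (1 - x) (1/2 - - l)) ->
  0 < eta < z -> z < xi ->
  V1 l z xi eta * Rpower z (l - 1/2) <= K * Rpower (xi - eta) (l + 1/2) / sqrt xi / sqrt (z - eta).
Proof.
  intros HK Hz Hzx. unfold V1.
  assert (Hsig : 1 - sigma1 z xi eta = z * (xi - eta) / ((z - eta) * xi)) by (unfold sigma1; field; lra).
  assert (Hpow : Rpower (z - eta) l * Rpower xi l / Rpower z (2 * l)
                 * Rpower (1 - sigma1 z xi eta) (1/2 - - l) * Rpower z (l - 1/2)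
               = Rpower (xi - eta) (l + 1/2) / sqrt xi / sqrt (z - eta)).
  { rewrite Hsig. apply ln_inv; [positivity | positivity |]. ln_expand. field. }
  replace (K * Rpower (xi - eta) (l + 1/2) / sqrt xi / sqrt (z - eta))
    with (K * (Rpower (xi - eta) (l + 1/2) / sqrt xi / sqrt (z - eta))) by (unfold Rdiv; ring).
  rewrite <- Hpow.
  set (P := Rpower (z - eta) l * Rpower xi l / Rpower z (2 * l)).
  assert (HP : 0 < P) by (unfold P; positivity).
  pose proof (Rpower_pos z (l - 1/2)).
  pose proof (HK _ (sigma1_neg z xi eta Hz Hzx)).
  replace (K * (P * Rpower (1 - sigma1 z xi eta) (1/2 - - l) * Rpower z (l - 1/2)))
    with (P * (K * Rpower (1 - sigma1 z xi eta) (1/2 - - l)) * Rpower z (l - 1/2)) by ring.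
  apply Rmult_le_compat_r; [lra|]. apply Rmult_le_compat_l; lra.
Qed.

Lemma V1_integrand_continuous (l xi eta z : R) : 0 < eta < z -> z < xi ->
  continuous (fun z => V1 l z xi eta * Rpower z (l - 1/2)) z.
Proof.
  intros Hz Hzx. unfold V1.
  apply continuous_Rmult; [apply continuous_Rmult|].
  - apply continuous_of_ex_derive. unfold Rpower. auto_derive. repeat split; try lra.
    apply Rgt_not_eq, exp_pos.
  - apply continuous_Rabs_comp, (continuous_comp (fun z => sigma1 z xi eta) (hyp2F1 (- l) (- l) 1)).
    + apply continuous_of_ex_derive. unfold sigma1. auto_derive. apply Rgt_not_eq. nra.
    + apply hyp2F1_continuous_neg; [lra | lra | apply sigma1_neg; assumption].
  - apply continuous_of_ex_derive. unfold Rpower. auto_derive. lra.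
Qed.

Lemma V1_integral_le (l : R) : exists A1, forall xi eta, 0 < eta -> eta < xi ->
  improper_int_le (fun z => V1 l z xi eta * Rpower z (l - 1/2)) eta xi
    (A1 * Rpower (xi - eta) l * (sqrt xi - sqrt eta)).
Proof.
  destruct (hyp2F1_neg_bound (- l) (- l) 1) as [K [HK Hbound]]; [lra | lra |].
  exists (4 * K). intros xi eta He Hex.
  set (B := K * Rpower (xi - eta) (l + 1/2) / sqrt xi).
  assert (HB : 0 <= B) by (apply Rdiv_le_0_compat; [apply Rmult_le_pos; [exact HK | apply Rlt_le, Rpower_pos] | positivity]).
  apply improper_int_le_of_primitive with
    (g := fun z => B / sqrt (z - eta)) (G := fun z => 2 * B * sqrt (z - eta)).
  - intros z Hz. apply V1_integrand_continuous; lra.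
  - intros z Hz. apply continuous_of_ex_derive. auto_derive. split; [lra|].
    split; [apply Rgt_not_eq, sqrt_lt_R0; lra | exact I].
  - intros z Hz. auto_derive; [lra|]. pose proof (sqrt_lt_R0 (z - eta) ltac:(lra)).
    replace (z + - eta) with (z - eta) by ring. field. lra.
  - intros z Hz. apply V1_integrand_le; [exact Hbound | lra | lra].
  - intros c d Hc Hcd Hd. cbv beta.
    assert (Hsd : sqrt (d - eta) <= sqrt (xi - eta)) by (apply sqrt_le_1_alt; lra).
    pose proof (sqrt_pos (c - eta)).
    apply Rle_trans with (2 * B * sqrt (xi - eta)); [nra|].
    assert (Hss : (xi - eta) / sqrt xi = sqrt (xi - eta) * sqrt (xi - eta) / sqrt xi)
      by (rewrite sqrt_sqrt by lra; reflexivity).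
    replace (2 * B * sqrt (xi - eta)) with (2 * K * Rpower (xi - eta) l * ((xi - eta) / sqrt xi)).
    2: { rewrite Hss. unfold B. rewrite Rpower_add_half by lra. field. apply Rgt_not_eq; positivity. }
    replace (4 * K * Rpower (xi - eta) l * (sqrt xi - sqrt eta))
      with (2 * K * Rpower (xi - eta) l * (2 * (sqrt xi - sqrt eta))) by ring.
    apply Rmult_le_compat_l; [pose proof (Rpower_pos (xi - eta) l); nra|].
    apply sub_div_sqrt_le; lra.
Qed.

(** * The integral of [V2] *)

Definition V2_const (l : R) : R :=
  Rabs (sin (PI * l)) * (Gamma (1 + l)) ^ 2 / (PI * Gamma (2 + 2 * l)).

Definition V2_kernel (l xi eta z : R) : R :=
  Rpower z (l + 1/2) * Rpower (xi - z) (- (l + 1/2)) / sqrt (eta - z).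

Lemma sigma2_neg (z xi eta : R) : 0 < z < eta -> eta < xi -> sigma2 z xi eta < 0.
Proof.
  intros Hz Hex. unfold sigma2.
  assert (0 < z * (xi - eta) / (xi * (eta - z))) by positivity. lra.
Qed.

Lemma V2_integrand_le (l xi eta K z : R) :
  (forall x, x < 0 -> Rabs (hyp2F1 (1 + l) (1 + l) (2 + 2 * l) x) <= K * Rpower (1 - x) (1/2 - (1 + l))) ->
  0 < z < eta -> eta < xi ->
  V2 l z xi eta * Rpower z (l - 1/2) <=
  Rabs (V2_const l) * K * (Rpower (xi - eta) (1 + 2 * l) / (sqrt xi * Rpower eta (l + 1/2)))
  * V2_kernel l xi eta z.
Proof.
  intros HK Hz Hex.
  set (P := Rpower (xi - eta) (1 + 2 * l) * z / (Rpower xi (l + 1) * Rpower (eta - z) (l + 1))).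
  set (F := Rabs (hyp2F1 (1 + l) (1 + l) (2 + 2 * l) (sigma2 z xi eta))).
  set (W := Rpower (1 - sigma2 z xi eta) (1/2 - (1 + l))).
  change (V2 l z xi eta) with (V2_const l * P * F).
  assert (HP : 0 < P) by (unfold P; positivity).
  assert (HF : 0 <= F) by apply Rabs_pos.
  assert (HFW : F <= K * W) by (apply HK, sigma2_neg; assumption).
  assert (Hsig : 1 - sigma2 z xi eta = eta * (xi - z) / (xi * (eta - z))) by (unfold sigma2; field; lra).
  assert (Hpow : P * W * Rpower z (l - 1/2)
               = Rpower (xi - eta) (1 + 2 * l) / (sqrt xi * Rpower eta (l + 1/2)) * V2_kernel l xi eta z).
  { unfold P, W, V2_kernel. rewrite Hsig. apply ln_inv; [positivity | positivity |]. ln_expand. field. }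
  pose proof (Rpower_pos z (l - 1/2)) as HZ.
  apply Rle_trans with (Rabs (V2_const l) * (P * (K * W) * Rpower z (l - 1/2))).
  - replace (V2_const l * P * F * Rpower z (l - 1/2)) with (V2_const l * (P * F * Rpower z (l - 1/2))) by ring.
    apply Rle_trans with (Rabs (V2_const l) * (P * F * Rpower z (l - 1/2))).
    + apply Rmult_le_compat_r; [apply Rmult_le_pos; [apply Rmult_le_pos|]; lra | apply Rle_abs].
    + apply Rmult_le_compat_l; [apply Rabs_pos|]. apply Rmult_le_compat_r; [lra|]. apply Rmult_le_compat_l; lra.
  - right. transitivity (Rabs (V2_const l) * K * (P * W * Rpower z (l - 1/2))); [ring | rewrite Hpow; ring].
Qed.

Lemma V2_integrand_continuous (l xi eta z : R) : -1/2 <= l -> 0 < z < eta -> eta < xi ->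
  continuous (fun z => V2 l z xi eta * Rpower z (l - 1/2)) z.
Proof.
  intros Hl Hz Hex. unfold V2.
  apply continuous_Rmult; [apply continuous_Rmult; [apply continuous_Rmult|]|].
  - apply continuous_const.
  - apply continuous_of_ex_derive. unfold Rpower. auto_derive. repeat split; try lra.
    apply Rgt_not_eq. positivity.
  - apply continuous_Rabs_comp, (continuous_comp (fun z => sigma2 z xi eta) (hyp2F1 (1 + l) (1 + l) (2 + 2 * l))).
    + apply continuous_of_ex_derive. unfold sigma2. auto_derive. apply Rgt_not_eq. positivity.
    + apply hyp2F1_continuous_neg; [lra | lra | apply sigma2_neg; assumption].
  - apply continuous_of_ex_derive. unfold Rpower. auto_derive. lra.
Qed.

Lemma V2_kernel_le_neg (l xi eta z : R) : -1/2 <= l -> 0 < z < eta -> eta < xi ->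
  V2_kernel l xi eta z <= Rpower eta (l + 1/2) * (Rpower (eta - z) (- l) / (eta - z)).
Proof.
  intros Hl Hz Hex. unfold V2_kernel.
  assert (Hzeta : Rpower z (l + 1/2) <= Rpower eta (l + 1/2)) by (apply Rle_Rpower_l; lra).
  assert (Hxi : Rpower (xi - z) (- (l + 1/2)) <= Rpower (eta - z) (- (l + 1/2)))
    by (apply Rpower_le_base_neg; lra).
  assert (Hexp : Rpower (eta - z) (- (l + 1/2)) / sqrt (eta - z) = Rpower (eta - z) (- l) / (eta - z)).
  { apply ln_inv; [positivity | positivity |]. ln_expand. field. }
  rewrite <- Hexp. unfold Rdiv. rewrite Rmult_assoc.
  assert (0 < / sqrt (eta - z)) by positivity.
  apply Rmult_le_compat; [apply Rlt_le, Rpower_pos | | exact Hzeta |].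
  - apply Rmult_le_pos; [apply Rlt_le, Rpower_pos | lra].
  - apply Rmult_le_compat_r; lra.
Qed.

Lemma V2_scale_le_neg (l xi eta : R) : l < 0 -> 0 < eta -> eta < xi ->
  Rpower (xi - eta) (1 + 2 * l) / (sqrt xi * Rpower eta (l + 1/2)) * Rpower eta (l + 1/2) * Rpower eta (- l)
  <= Rpower (xi - eta) (l + 1/2) * Rpower (1 - eta / xi) (l + 1/2).
Proof.
  intros Hl He Hex.
  replace (1 - eta / xi) with ((xi - eta) / xi) by (field; lra).
  assert (Hlhs : Rpower (xi - eta) (1 + 2 * l) / (sqrt xi * Rpower eta (l + 1/2)) * Rpower eta (l + 1/2)
                 * Rpower eta (- l) = Rpower (xi - eta) (1 + 2 * l) / sqrt xi * Rpower eta (- l)).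
  { field. split; apply Rgt_not_eq; positivity. }
  assert (Hrhs : Rpower (xi - eta) (l + 1/2) * Rpower ((xi - eta) / xi) (l + 1/2)
                 = Rpower (xi - eta) (1 + 2 * l) / sqrt xi * Rpower xi (- l)).
  { apply ln_inv; [positivity | positivity |]. ln_expand. field. }
  rewrite Hlhs, Hrhs. apply Rmult_le_compat_l; [apply Rlt_le; positivity | apply Rle_Rpower_l; lra].
Qed.

Lemma V2_integral_le_neg (l : R) : -1/2 <= l -> l < 0 -> exists A2, forall xi eta, 0 < eta -> eta < xi ->
  improper_int_le (fun z => V2 l z xi eta * Rpower z (l - 1/2)) 0 eta
    (A2 * Rpower (xi - eta) (l + 1/2) * Rpower (1 - eta / xi) (l + 1/2)).
Proof.
  intros Hl Hl0.
  destruct (hyp2F1_neg_bound (1 + l) (1 + l) (2 + 2 * l)) as [K [HK Hbound]]; [lra | lra |].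
  set (Q := Rabs (V2_const l) * K).
  assert (HQ : 0 <= Q) by (apply Rmult_le_pos; [apply Rabs_pos | exact HK]).
  exists (Q / - l). intros xi eta He Hex.
  set (D := Rpower (xi - eta) (1 + 2 * l) / (sqrt xi * Rpower eta (l + 1/2))).
  assert (HD : 0 < D) by (unfold D; positivity).
  set (Ke := Q * D * Rpower eta (l + 1/2)).
  assert (HKe : 0 <= Ke) by (unfold Ke; pose proof (Rpower_pos eta (l + 1/2)); apply Rmult_le_pos; nra).
  apply improper_int_le_of_primitive with
    (g := fun z => Ke * (Rpower (eta - z) (- l) / (eta - z)))
    (G := fun z => - (Ke / - l) * Rpower (eta - z) (- l)).
  - intros z Hz. apply V2_integrand_continuous; lra.
  - intros z Hz. apply continuous_of_ex_derive. unfold Rpower. auto_derive. lra.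
  - intros z Hz. unfold Rpower. auto_derive; [lra|].
    replace (eta + - z) with (eta - z) by ring. field. lra.
  - intros z Hz. eapply Rle_trans; [apply (V2_integrand_le l xi eta K); [exact Hbound | lra | lra]|].
    fold Q D. unfold Ke. rewrite (Rmult_assoc (Q * D)).
    apply Rmult_le_compat_l; [apply Rmult_le_pos; lra|]. apply V2_kernel_le_neg; lra.
  - intros c d Hc Hcd Hd. cbv beta.
    assert (Hc1 : Rpower (eta - c) (- l) <= Rpower eta (- l)) by (apply Rle_Rpower_l; lra).
    pose proof (Rpower_pos (eta - d) (- l)).
    assert (HKm : 0 <= Ke / - l) by (apply Rdiv_le_0_compat; lra).
    apply Rle_trans with (Ke / - l * Rpower eta (- l)); [nra|].
    replace (Ke / - l * Rpower eta (- l)) with (Q / - l * (D * Rpower eta (l + 1/2) * Rpower eta (- l)))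
      by (unfold Ke; field; lra).
    rewrite (Rmult_assoc (Q / - l)). apply Rmult_le_compat_l; [apply Rdiv_le_0_compat; lra|].
    apply V2_scale_le_neg; assumption.
Qed.

Section PositiveOrder.

Variables l xi eta : R.
Hypothesis l_pos : 0 < l.
Hypothesis eta_pos : 0 < eta.
Hypothesis eta_lt_xi : eta < xi.

Definition V2_prim (z : R) : R :=
  -2 * sqrt (eta - z) * Rpower (xi - z) (- (l + 1/2)) + (1 + 2 * l) / l * Rpower (xi - z) (- l).

Definition V2_prim_deriv (z : R) : R :=
  Rpower (xi - z) (- (l + 1/2)) / sqrt (eta - z)
  - (1 + 2 * l) * sqrt (eta - z) * Rpower (xi - z) (- (l + 1/2)) / (xi - z)
  + (1 + 2 * l) * Rpower (xi - z) (- l) / (xi - z).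

Lemma is_derive_V2_prim (z : R) : z < eta -> is_derive V2_prim z (V2_prim_deriv z).
Proof.
  intros Hz. unfold V2_prim, V2_prim_deriv, Rpower. auto_derive; [repeat split; lra|].
  replace (eta + - z) with (eta - z) by ring. replace (xi + - z) with (xi - z) by ring.
  field. repeat split; try lra. apply Rgt_not_eq, sqrt_lt_R0; lra.
Qed.

(* The last two terms of [V2_prim_deriv] sum to a nonnegative quantity, as [eta - z <= xi - z]. *)
Lemma V2_kernel_le_pos (z : R) : 0 < z < eta ->
  V2_kernel l xi eta z <= Rpower eta (l + 1/2) * V2_prim_deriv z.
Proof.
  intros Hz. unfold V2_kernel, V2_prim_deriv.
  assert (Hhalf : Rpower (xi - z) (- (l + 1/2)) = Rpower (xi - z) (- l) / sqrt (xi - z)).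
  { apply ln_inv; [positivity | positivity |]. ln_expand. field. }
  assert (Hsq : sqrt (eta - z) <= sqrt (xi - z)) by (apply sqrt_le_1_alt; lra).
  assert (Hcorr : 0 <= - (1 + 2 * l) * sqrt (eta - z) * Rpower (xi - z) (- (l + 1/2)) / (xi - z)
                       + (1 + 2 * l) * Rpower (xi - z) (- l) / (xi - z)).
  { rewrite Hhalf.
    replace (- (1 + 2 * l) * sqrt (eta - z) * (Rpower (xi - z) (- l) / sqrt (xi - z)) / (xi - z)
             + (1 + 2 * l) * Rpower (xi - z) (- l) / (xi - z))
      with ((1 + 2 * l) * Rpower (xi - z) (- l) / (xi - z) / sqrt (xi - z) * (sqrt (xi - z) - sqrt (eta - z)))
      by (field; split; [lra | apply Rgt_not_eq; positivity]).
    apply Rmult_le_pos; [apply Rlt_le; positivity | lra]. }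
  assert (Hz_eta : Rpower z (l + 1/2) <= Rpower eta (l + 1/2)) by (apply Rle_Rpower_l; lra).
  assert (Hk : 0 < Rpower (xi - z) (- (l + 1/2)) / sqrt (eta - z)) by positivity.
  apply Rle_trans with (Rpower eta (l + 1/2) * (Rpower (xi - z) (- (l + 1/2)) / sqrt (eta - z))).
  - unfold Rdiv. rewrite Rmult_assoc. apply Rmult_le_compat_r; [apply Rlt_le; positivity | exact Hz_eta].
  - apply Rmult_le_compat_l; [apply Rlt_le, Rpower_pos | lra].
Qed.

Lemma V2_prim_increment_le (c d : R) : 0 < c -> c <= d -> d < eta ->
  V2_prim d - V2_prim c <= ((1 + 2 * l) / l + 2) * Rpower (xi - eta) (- l).
Proof.
  intros Hc Hcd Hd. unfold V2_prim.
  set (k := (1 + 2 * l) / l). assert (Hk : 0 < k) by (unfold k; positivity).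
  assert (Hd_le : Rpower (xi - d) (- l) <= Rpower (xi - eta) (- l)) by (apply Rpower_le_base_neg; lra).
  assert (Hc_le : Rpower (xi - c) (- l) <= Rpower (xi - eta) (- l)) by (apply Rpower_le_base_neg; lra).
  assert (Hsd : 0 <= sqrt (eta - d) * Rpower (xi - d) (- (l + 1/2)))
    by (apply Rmult_le_pos; [apply sqrt_pos | apply Rlt_le, Rpower_pos]).
  assert (Hsc : sqrt (eta - c) * Rpower (xi - c) (- (l + 1/2)) <= Rpower (xi - c) (- l)).
  { replace (Rpower (xi - c) (- (l + 1/2))) with (Rpower (xi - c) (- l) / sqrt (xi - c))
      by (apply ln_inv; [positivity | positivity |]; ln_expand; field).
    assert (sqrt (eta - c) <= sqrt (xi - c)) by (apply sqrt_le_1_alt; lra).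
    pose proof (sqrt_pos (eta - c)). pose proof (Rpower_pos (xi - c) (- l)).
    assert (0 < sqrt (xi - c)) by positivity.
    replace (sqrt (eta - c) * (Rpower (xi - c) (- l) / sqrt (xi - c)))
      with (Rpower (xi - c) (- l) * (sqrt (eta - c) / sqrt (xi - c))) by (field; lra).
    rewrite <- (Rmult_1_r (Rpower (xi - c) (- l))) at 2.
    apply Rmult_le_compat_l; [lra|].
    apply Rmult_le_reg_r with (sqrt (xi - c)); [lra|].
    replace (sqrt (eta - c) / sqrt (xi - c) * sqrt (xi - c)) with (sqrt (eta - c)) by (field; lra). lra. }
  assert (k * Rpower (xi - d) (- l) <= k * Rpower (xi - eta) (- l)) by (apply Rmult_le_compat_l; lra).
  assert (0 <= k * Rpower (xi - c) (- l)) by (apply Rlt_le; positivity).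
  lra.
Qed.

Lemma V2_scale_le_pos :
  Rpower (xi - eta) (1 + 2 * l) / (sqrt xi * Rpower eta (l + 1/2)) * Rpower eta (l + 1/2) * Rpower (xi - eta) (- l)
  <= 2 * (Rpower (xi - eta) l * (sqrt xi - sqrt eta)).
Proof.
  replace (Rpower (xi - eta) (1 + 2 * l) / (sqrt xi * Rpower eta (l + 1/2)) * Rpower eta (l + 1/2)
           * Rpower (xi - eta) (- l))
    with (Rpower (xi - eta) l * ((xi - eta) / sqrt xi)).
  - rewrite <- Rmult_assoc, (Rmult_comm 2), Rmult_assoc.
    apply Rmult_le_compat_l; [apply Rlt_le, Rpower_pos | apply sub_div_sqrt_le; lra].
  - apply ln_inv; [positivity | positivity |]. ln_expand. field.
Qed.

End PositiveOrder.

Lemma V2_integral_le_pos (l : R) : 0 < l -> exists A2, forall xi eta, 0 < eta -> eta < xi ->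
  improper_int_le (fun z => V2 l z xi eta * Rpower z (l - 1/2)) 0 eta
    (A2 * Rpower (xi - eta) l * (sqrt xi - sqrt eta)).
Proof.
  intros Hl.
  destruct (hyp2F1_neg_bound (1 + l) (1 + l) (2 + 2 * l)) as [K [HK Hbound]]; [lra | lra |].
  set (Q := Rabs (V2_const l) * K).
  assert (HQ : 0 <= Q) by (apply Rmult_le_pos; [apply Rabs_pos | exact HK]).
  set (k := (1 + 2 * l) / l + 2).
  assert (Hk : 0 < k) by (assert (0 < (1 + 2 * l) / l) by positivity; unfold k; lra).
  exists (2 * Q * k). intros xi eta He Hex.
  set (D := Rpower (xi - eta) (1 + 2 * l) / (sqrt xi * Rpower eta (l + 1/2))).
  assert (HD : 0 < D) by (unfold D; positivity).
  set (Ke := Q * D * Rpower eta (l + 1/2)).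
  assert (HKe : 0 <= Ke) by (unfold Ke; pose proof (Rpower_pos eta (l + 1/2)); apply Rmult_le_pos; nra).
  apply improper_int_le_of_primitive with
    (g := fun z => Ke * V2_prim_deriv l xi eta z) (G := fun z => Ke * V2_prim l xi eta z).
  - intros z Hz. apply V2_integrand_continuous; lra.
  - intros z Hz. apply continuous_of_ex_derive. unfold V2_prim_deriv, Rpower. auto_derive.
    repeat split; try lra; apply Rgt_not_eq; positivity.
  - intros z Hz. apply (is_derive_scal (V2_prim l xi eta)), is_derive_V2_prim; lra.
  - intros z Hz. eapply Rle_trans; [apply (V2_integrand_le l xi eta K); [exact Hbound | lra | lra]|].
    fold Q D. unfold Ke. rewrite (Rmult_assoc (Q * D)).
    apply Rmult_le_compat_l; [apply Rmult_le_pos; lra|]. apply V2_kernel_le_pos; lra.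
  - intros c d Hc Hcd Hd. cbv beta.
    rewrite <- Rmult_minus_distr_l.
    apply Rle_trans with (Ke * (k * Rpower (xi - eta) (- l))).
    { apply Rmult_le_compat_l; [exact HKe | apply V2_prim_increment_le; lra]. }
    replace (Ke * (k * Rpower (xi - eta) (- l)))
      with (Q * k * (D * Rpower eta (l + 1/2) * Rpower (xi - eta) (- l))) by (unfold Ke; ring).
    replace (2 * Q * k * Rpower (xi - eta) l * (sqrt xi - sqrt eta))
      with (Q * k * (2 * (Rpower (xi - eta) l * (sqrt xi - sqrt eta)))) by ring.
    apply Rmult_le_compat_l; [apply Rmult_le_pos; lra | apply V2_scale_le_pos; lra].
Qed.

Theorem lemmaA2 :
  forall l : R, -1/2 <= l ->
  exists A1 A2 : R,
    (forall xi eta : R, 0 < eta -> eta < xi ->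
       improper_int_le (fun z => V1 l z xi eta * Rpower z (l - 1/2)) eta xi
         (A1 * Rpower (xi - eta) l * (sqrt xi - sqrt eta))) /\
    (0 < l -> forall xi eta : R, 0 < eta -> eta < xi ->
       improper_int_le (fun z => V2 l z xi eta * Rpower z (l - 1/2)) 0 eta
         (A2 * Rpower (xi - eta) l * (sqrt xi - sqrt eta))) /\
    (l < 0 -> forall xi eta : R, 0 < eta -> eta < xi ->
       improper_int_le (fun z => V2 l z xi eta * Rpower z (l - 1/2)) 0 eta
         (A2 * Rpower (xi - eta) (l + 1/2) * Rpower (1 - eta / xi) (l + 1/2))).
Proof.
  intros l Hl. destruct (V1_integral_le l) as [A1 HA1].
  destruct (Rtotal_order l 0) as [Hneg | [Hzero | Hpos]].
  - destruct (V2_integral_le_neg l Hl Hneg) as [A2 HA2].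
    exists A1, A2. repeat split; [exact HA1 | intros; lra | intros _; exact HA2].
  - exists A1, 0. repeat split; [exact HA1 | intros; lra | intros; lra].
  - destruct (V2_integral_le_pos l Hpos) as [A2 HA2].
    exists A1, A2. repeat split; [exact HA1 | intros _; exact HA2 | intros; lra].
Qed.
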